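(* Let $E$ be a biordered set satisfying: (E1) there exists $0\in E$ with $0\,\omega\,e$ for every $e\in E$; (E2) there is a map $e\mapsto e'$ on $E$ such that for all $e,f\in E$: (i) $(e')'=e$; (ii) $f\,\omega^l\,e$ iff $e'\,\omega^r\,f'$; (iii) $f\,\omega^l\,e'$ iff $M(f,e)=\{0\}$. Then also: (i) there exists $1\in E$ such that $e\,\omega\,1$ for every $e\in E$; (ii) for $e,f\in E$, $f\,\omega^r\,e$ if and only if $e'\,\omega^l\,f'$; (iii) for $e,f\in E$, $f\,\omega^r\,e'$ if and only if $M(e,f)=\{0\}$.
   Context: A biordered set is a partial algebra as in Nambooripad's theory; e.g. the set of idempotents $E(S)$ of a semigroup $S$ with product $ef$ (computed in $S$) defined when $\{ef,fe\}\cap\{e,f\}\ne\emptyset$. In $E$: $\omega^l=\{(e,f): ef=e\}$, $\omega^r=\{(e,f): fe=e\}$, $\omega=\omega^l\cap\omega^r$, and $M(e,f)=\{g\in E: g\,\omega^l\,e,\ g\,\omega^r\,f\}$. *)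

(* Biordered sets following Nambooripad (1979),
   "Structure of regular semigroups I", axioms (B1)-(B4) and their duals. *)

(* A partial algebra: carrier, domain D of the partial product, and the product
   (a total function whose values are only meaningful on D). *)
Record pre_biordered := PreBiordered {
  bo_car :> Type;
  bo_D : bo_car -> bo_car -> Prop;
  bo_mul : bo_car -> bo_car -> bo_car
}.

Section Rel.
Context {E : pre_biordered}.
Local Notation "x * y" := (bo_mul E x y).

Definition wl (e f : E) : Prop := bo_D E e f /\ e * f = e.
Definition wr (e f : E) : Prop := bo_D E f e /\ f * e = e.
Definition omega (e f : E) : Prop := wl e f /\ wr e f.
Definition Rrel (e f : E) : Prop := wr e f /\ wr f e.
Definition Lrel (e f : E) : Prop := wl e f /\ wl f e.

Definition biordered_axioms : Prop :=
  (forall e, wl e e) /\ (forall e, wr e e) /\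
  (forall e f g, wl e f -> wl f g -> wl e g) /\
  (forall e f g, wr e f -> wr f g -> wr e g) /\
  (forall e f, bo_D E e f <-> (wr e f \/ wl e f \/ wr f e \/ wl f e)) /\
  (forall e f, wr f e -> Rrel f (f * e) /\ omega (f * e) e) /\
  (forall e f, wl f e -> Lrel f (e * f) /\ omega (e * f) e) /\
  (forall e f g, wl g f -> wr f e -> wr g e -> wl (g * e) (f * e)) /\
  (forall e f g, wr g f -> wl f e -> wl g e -> wr (e * g) (e * f)) /\
  (forall e f g, wr g f -> wr f e -> g * f = (g * e) * f) /\
  (forall e f g, wl g f -> wl f e -> f * g = f * (e * g)) /\
  (forall e f g, wl g f -> wr f e -> wr g e -> (f * g) * e = (f * e) * (g * e)) /\
  (forall e f g, wr g f -> wl f e -> wl g e -> e * (g * f) = (e * g) * (e * f)) /\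
  (forall e f g, wr f e -> wr g e -> wr (f * e) (g * e) ->
     exists g1, omega g1 g /\ wr f g1 /\ g1 * e = f * e) /\
  (forall e f g, wl f e -> wl g e -> wl (e * f) (e * g) ->
     exists g1, omega g1 g /\ wl f g1 /\ e * g1 = e * f).

Definition Mset (e f : E) : E -> Prop := fun g => wl g e /\ wr g f.

Definition Mset_is_singleton (e f z : E) : Prop := forall g, Mset e f g <-> g = z.

End Rel.

Record biordered_set := BiorderedSet {
  bo_pre :> pre_biordered;
  bo_ax : @biordered_axioms bo_pre
}.

From Stdlib Require Import Setoid.

(* The top element is 0': [e omega^l 0'] because M(e,0) = {0}, and
   [e omega^r 0'] is dual to [0 omega^l e'].  Parts (ii) and (iii) follow by
   applying (E2)(ii) to [e'] and [f'] and cancelling the involution. *)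

Section Involution.

Variable E : pre_biordered.
Variable c : E -> E.
Hypothesis c_involutive : forall e : E, c (c e) = e.
Hypothesis wl_wr_c : forall e f : E, wl f e <-> wr (c e) (c f).

Lemma wr_wl_c (e f : E) : wr f e <-> wl (c e) (c f).
Proof.
  rewrite (wl_wr_c (c f) (c e)), !c_involutive.
  reflexivity.
Qed.

Lemma wr_c_wl_c (e f : E) : wr f (c e) <-> wl e (c f).
Proof.
  rewrite (wl_wr_c (c f) e), c_involutive.
  reflexivity.
Qed.

End Involution.

Lemma Mset_bottom_singleton (E : pre_biordered) (z : E) (z_bottom : forall e : E, omega z e)
  (e : E) : Mset_is_singleton e z z.
Proof.
  intro g; split.
  - intros [_ [_ Hzg]].
    destruct (z_bottom g) as [[_ Hzg'] _].
    rewrite <- Hzg; exact Hzg'.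
  - intros ->; split.
    + exact (proj1 (z_bottom e)).
    + exact (proj2 (z_bottom z)).
Qed.

Theorem lemma3p2 (E : biordered_set) (z : E) (c : E -> E)
  (E1 : forall e : E, omega z e)
  (E2i : forall e : E, c (c e) = e)
  (E2ii : forall e f : E, wl f e <-> wr (c e) (c f))
  (E2iii : forall e f : E, wl f (c e) <-> Mset_is_singleton f e z) :
  (exists o : E, forall e : E, omega e o) /\
  (forall e f : E, wr f e <-> wl (c e) (c f)) /\
  (forall e f : E, wr f (c e) <-> Mset_is_singleton e f z).
Proof.
  split; [| split].
  - exists (c z); intro e; split.
    + apply E2iii, Mset_bottom_singleton, E1.
    + apply (wr_c_wl_c E c E2i E2ii), E1.
  - exact (wr_wl_c E c E2i E2ii).
  - intros e f.
    rewrite (wr_c_wl_c E c E2i E2ii).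
    apply E2iii.
Qed.
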